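(* Let $T$ be a tree with root $r$, edges directed towards $r$, let $c:V(T)\to\mathbb{Z}$, and let $X$ be an edge set of $T$ that is legal for $c$. Then there is a rayless $X'\subseteq X$ such that (1) $A(v,X')\ge c(v)$ for all vertices $v$ with $A(v,X)\ge c(v)$; and (2) $A(v,X')=A(v,X)$ for all $v\in ter(X)$.
   Context: Edges are ordered pairs $st$ pointing from $s$ to $t$, directed towards $r$; a leaf is a vertex with no incoming edges. For an edge set $X$, $V(X)$ is the set of vertices incident with an edge of $X$, and $ter(X)$ is the set of vertices $s$ such that there is no vertex $t$ with $st\in X$. $A(v,X)$ is the number of edges of $X$ pointing to $v$ minus the number pointing away from $v$. An edge set is \emph{rayless} if it contains no ray. A \emph{leafless forest} is an edge set $S$ such that the subforest $(V(S),S)$ of $T$ has no leaf (no vertex without an incoming edge of $S$). Given $c$, a subset $S\subseteq X$ is \emph{illegal} for $c$ if $S$ is a leafless forest and $A(s,X\setminus S)\le c(s)$ for all $st\in S$; $X$ is \emph{legal} for $c$ if no nonempty subset of $X$ is illegal for $c$. *)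

From Stdlib Require Import ZArith List.
Import ListNotations.
Open Scope Z_scope.

(* A rooted tree on vertex type V with root r: every vertex v <> r has a
   unique parent [par v]; the edges are the pairs (v, par v) with v <> r,
   directed towards r; [par r = r] is a dummy value (not an edge), and
   every vertex reaches r after finitely many parent steps (connected, acyclic). *)
Definition rooted_tree {V : Type} (r : V) (par : V -> V) : Prop :=
  par r = r /\ forall v, exists n : nat, Nat.iter n par v = r.

Definition tedge {V : Type} (r : V) (par : V -> V) (s t : V) : Prop :=
  s <> r /\ t = par s.

Definition edge_set {V : Type} (r : V) (par : V -> V) (X : V -> V -> Prop) : Prop :=
  forall s t, X s t -> tedge r par s t.

Definition subrel {V : Type} (X Y : V -> V -> Prop) : Prop :=
  forall s t, X s t -> Y s t.

Definition setminus {V : Type} (X S : V -> V -> Prop) : V -> V -> Prop :=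
  fun s t => X s t /\ ~ S s t.

Definition VX {V : Type} (X : V -> V -> Prop) (v : V) : Prop :=
  exists w, X v w \/ X w v.

Definition ter {V : Type} (X : V -> V -> Prop) (s : V) : Prop :=
  ~ exists t, X s t.

Definition rayless {V : Type} (X : V -> V -> Prop) : Prop :=
  ~ exists x : nat -> V,
      (forall i j, x i = x j -> i = j) /\
      (forall i, X (x i) (x (S i)) \/ X (x (S i)) (x i)).

(* Counting incoming edges (possibly infinitely many). *)
Definition in_ge {V : Type} (X : V -> V -> Prop) (v : V) (n : nat) : Prop :=
  exists l : list V, NoDup l /\ length l = n /\ forall s, In s l -> X s v.

Definition in_le {V : Type} (X : V -> V -> Prop) (v : V) (n : nat) : Prop :=
  forall l : list V, NoDup l -> (forall s, In s l -> X s v) -> (length l <= n)%nat.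

(* number of edges of X pointing away from v (0 or 1 in a tree) *)
Definition out_is {V : Type} (X : V -> V -> Prop) (v : V) (o : Z) : Prop :=
  (o = 1 /\ exists t, X v t) \/ (o = 0 /\ ~ exists t, X v t).

(* A(v,X) >= z   (true if infinitely many edges of X point to v) *)
Definition A_ge {V : Type} (X : V -> V -> Prop) (v : V) (z : Z) : Prop :=
  exists (n : nat) (o : Z), in_ge X v n /\ out_is X v o /\ Z.of_nat n - o >= z.

(* A(v,X) <= z   (false if infinitely many edges of X point to v) *)
Definition A_le {V : Type} (X : V -> V -> Prop) (v : V) (z : Z) : Prop :=
  exists (n : nat) (o : Z), in_le X v n /\ out_is X v o /\ Z.of_nat n - o <= z.

(* A(v,X) = A(v,Y): same number of outgoing edges and equinumerous
   (in bijection) sets of incoming edges. *)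
Definition A_eq {V : Type} (X Y : V -> V -> Prop) (v : V) : Prop :=
  ((exists t, X v t) <-> (exists t, Y v t)) /\
  exists (f : {s : V | X s v} -> {s : V | Y s v})
         (g : {s : V | Y s v} -> {s : V | X s v}),
    (forall a, g (f a) = a) /\ (forall b, f (g b) = b).

Definition leafless_forest {V : Type} (S : V -> V -> Prop) : Prop :=
  forall v, VX S v -> exists s, S s v.

Definition illegal {V : Type} (c : V -> Z) (X S : V -> V -> Prop) : Prop :=
  subrel S X /\ leafless_forest S /\
  forall s t, S s t -> A_le (setminus X S) s (c s).

Definition legal {V : Type} (c : V -> Z) (X : V -> V -> Prop) : Prop :=
  forall S, subrel S X -> (exists s t, S s t) -> ~ illegal c X S.

From Stdlib Require Import ZArith List Lia Classical ProofIrrelevance.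
Import ListNotations.
Open Scope Z_scope.

(* Call a vertex safe at rank n+1 if A(v,X) < c(v), or if at least c(v)+1 of
   its in-neighbours are safe at rank n.  If some vertex with an outgoing edge
   were never safe, the edges of X leaving unsafe vertices would form a
   nonempty illegal set; so legality makes every non-terminal vertex safe.
   X' keeps the edges of X into terminal vertices, and the edges u -> p for
   which u becomes safe at an earlier rank than p.  A ray of X' eventually
   points away from the root, so along it the ranks would decrease forever.
   A vertex v with A(v,X) >= c(v) that is safe at its least rank n+1 has at
   least c(v)+1 in-neighbours of rank n, all joined to v in X', so
   A(v,X') >= c(v). *)

Lemma A_ge_in_ge {V : Type} (Y : V -> V -> Prop) (v : V) (n : nat) (z : Z) :
  in_ge Y v n -> z + 1 <= Z.of_nat n -> A_ge Y v z.
Proof.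
  intros Hin Hn.
  destruct (classic (exists t, Y v t)) as [Hout | Hout].
  - exists n, 1; repeat split; [exact Hin | left; auto | lia].
  - exists n, 0; repeat split; [exact Hin | right; auto | lia].
Qed.

Section Ranks.

Context {V : Type} (X : V -> V -> Prop) (c : V -> Z).

Fixpoint safe_at (n : nat) (v : V) : Prop :=
  match n with
  | O => False
  | S n => ~ A_ge X v (c v) \/
      exists l, NoDup l /\ (forall u, In u l -> X u v /\ safe_at n u) /\
                c v + 1 <= Z.of_nat (length l)
  end.

Definition safe (v : V) : Prop := exists n, safe_at n v.

Lemma safe_at_S (n : nat) (v : V) : safe_at n v -> safe_at (S n) v.
Proof.
  revert v; induction n as [|n IH]; intros v Hv; [destruct Hv|].
  destruct Hv as [Hv | (l & Hnd & Hl & Hlen)]; [left; exact Hv|].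
  right; exists l; split; [exact Hnd | split; [|exact Hlen]].
  intros w Hw; split; [apply Hl, Hw | apply IH, Hl, Hw].
Qed.

Lemma safe_at_le (n m : nat) (v : V) : (n <= m)%nat -> safe_at n v -> safe_at m v.
Proof.
  intros Hle; induction Hle; auto using safe_at_S.
Qed.

Lemma safe_list_common_rank (l : list V) :
  (forall u, In u l -> safe u) -> exists N, forall u, In u l -> safe_at N u.
Proof.
  induction l as [|a l IH]; intros Hl; [exists O; intros u []|].
  destruct (Hl a (or_introl eq_refl)) as [na Ha].
  destruct IH as [N HN]; [intros u Hu; apply Hl; right; exact Hu|].
  exists (na + N)%nat; intros u [<- | Hu].
  - apply (safe_at_le na); [lia | exact Ha].
  - apply (safe_at_le N); [lia | auto].
Qed.

Lemma unsafe_A_ge (s : V) : ~ safe s -> A_ge X s (c s).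
Proof.
  intros Hs; apply NNPP; intros Ha; apply Hs; exists 1%nat; left; exact Ha.
Qed.

Lemma unsafe_safe_in_neighbours (s : V) (l : list V) :
  ~ safe s -> NoDup l -> (forall u, In u l -> X u s /\ safe u) ->
  Z.of_nat (length l) <= c s.
Proof.
  intros Hs Hnd Hl; apply Z.nlt_ge; intros Hlt.
  destruct (safe_list_common_rank l) as [N HN]; [intros u Hu; apply Hl, Hu|].
  apply Hs; exists (S N); right; exists l; split; [exact Hnd | split; [|lia]].
  intros u Hu; split; [apply Hl, Hu | apply HN, Hu].
Qed.

Definition unsafe_edges (s t : V) : Prop := X s t /\ ~ safe s.

Lemma unsafe_edges_leafless : leafless_forest unsafe_edges.
Proof.
  intros v [w [[Hvw Hv] | Hwv]]; [|exists w; exact Hwv].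
  apply NNPP; intros Hno.
  destruct (unsafe_A_ge v Hv) as (n & o & (l & Hnd & Hlen & Hl) & Ho & Hge).
  assert (o = 1) as -> by (destruct Ho as [[Ho _] | [_ Ho]]; [exact Ho | exfalso; eauto]).
  enough (Z.of_nat (length l) <= c v) by lia.
  apply unsafe_safe_in_neighbours; [exact Hv | exact Hnd |].
  intros u Hu; split; [apply Hl, Hu|].
  apply NNPP; intros Hu'; apply Hno; exists u; split; [apply Hl, Hu | exact Hu'].
Qed.

(* Once the unsafe edges are removed, an unsafe vertex keeps no outgoing edge
   and at most c(s) incoming ones. *)
Lemma unsafe_A_le (s : V) : ~ safe s -> A_le (setminus X unsafe_edges) s (c s).
Proof.
  intros Hs.
  assert (Hc0 : 0 <= c s)
    by exact (unsafe_safe_in_neighbours s [] Hs (NoDup_nil _) (fun u Hu => False_ind _ Hu)).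
  exists (Z.to_nat (c s)), 0; repeat split.
  - intros l Hnd Hl.
    enough (Z.of_nat (length l) <= c s) by lia.
    apply unsafe_safe_in_neighbours; [exact Hs | exact Hnd |].
    intros u Hu; destruct (Hl u Hu) as [Hx Hnot]; split; [exact Hx|].
    apply NNPP; intros Hu'; apply Hnot; split; assumption.
  - right; split; [reflexivity|]. intros (t & Ht & Hnot); apply Hnot; split; assumption.
  - lia.
Qed.

Lemma legal_out_safe : legal c X -> forall u t, X u t -> safe u.
Proof.
  intros Hlegal u0 t0 H0; apply NNPP; intros Hu0.
  apply (Hlegal unsafe_edges); [intros s t [H _]; exact H | exists u0, t0; split; auto |].
  split; [intros s t [H _]; exact H | split; [exact unsafe_edges_leafless |]].
  intros s t [_ Hs]; exact (unsafe_A_le s Hs).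
Qed.

Definition pruned (u p : V) : Prop :=
  X u p /\ (ter X p \/ exists m, safe_at m u /\ ~ safe_at m p).

Lemma pruned_A_ge (n : nat) (v : V) :
  safe_at n v -> A_ge X v (c v) -> A_ge pruned v (c v).
Proof.
  revert v; induction n as [|n IH]; intros v Hv Ha; [destruct Hv|].
  destruct (classic (safe_at n v)) as [Hn | Hn]; [apply IH; assumption|].
  destruct Hv as [Hv | (l & Hnd & Hl & Hlen)]; [contradiction|].
  apply (A_ge_in_ge _ _ (length l)); [|exact Hlen].
  exists l; split; [exact Hnd | split; [reflexivity|]].
  intros u Hu; split; [apply Hl, Hu | right; exists n; split; [apply Hl, Hu | exact Hn]].
Qed.

Lemma pruned_A_ge_ter (v : V) : ter X v -> A_ge X v (c v) -> A_ge pruned v (c v).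
Proof.
  intros Hter (n & o & (l & Hnd & Hlen & Hl) & Ho & Hge).
  exists n, o; repeat split; [exists l; repeat split; auto | | exact Hge].
  destruct Ho as [[_ Hout] | [-> _]]; [contradiction|].
  right; split; [reflexivity|]. intros (t & Ht & _); apply Hter; eauto.
Qed.

Lemma pruned_A_eq_ter (v : V) : ter X v -> A_eq pruned X v.
Proof.
  intros Hter; split.
  - split; [intros (t & Ht & _); eauto | intros Hout; contradiction].
  - unshelve eexists (fun a => exist _ (proj1_sig a) _), (fun b => exist _ (proj1_sig b) _).
    + exact (proj1 (proj2_sig a)).
    + exact (conj (proj2_sig b) (or_introl Hter)).
    + split; intros [s Hs]; simpl; f_equal; apply proof_irrelevance.
Qed.

Lemma no_infinite_rank_descent (z : nat -> V) :
  (forall i, exists m, safe_at m (z (S i)) /\ ~ safe_at m (z i)) ->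
  forall n i, ~ safe_at n (z i).
Proof.
  intros Hstep n; induction n as [|n IH]; intros i Hz; [destruct Hz|].
  destruct (Hstep i) as (m & Hm1 & Hm2).
  destruct (le_lt_dec m n) as [Hle | Hlt].
  - apply (IH (S i)), (safe_at_le m); assumption.
  - apply Hm2, (safe_at_le (S n)); assumption.
Qed.

End Ranks.

(* Along an injective path in a rooted tree, an edge pointing towards the
   root cannot follow one pointing away from it, and the path cannot point
   towards the root forever. *)
Lemma tree_ray_descends {V : Type} (r : V) (par : V -> V) (Y : V -> V -> Prop)
  (x : nat -> V) :
  rooted_tree r par -> edge_set r par Y ->
  (forall i j, x i = x j -> i = j) ->
  (forall i, Y (x i) (x (S i)) \/ Y (x (S i)) (x i)) ->
  exists k, forall j, Y (x (S (k + j)%nat)) (x (k + j)%nat).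
Proof.
  intros HT HY Hinj Hx.
  assert (Hdown : forall i, Y (x (S i)) (x i) -> Y (x (S (S i))) (x (S i))).
  { intros i Hd. destruct (Hx (S i)) as [Hu | Hd']; [|exact Hd'].
    destruct (HY _ _ Hu) as [_ Hu'], (HY _ _ Hd) as [_ Hd''].
    rewrite <- Hd'' in Hu'. apply Hinj in Hu'. lia. }
  assert (Hk : exists k, Y (x (S k)) (x k)).
  { apply NNPP; intros Hno.
    assert (Hup : forall i, x i = Nat.iter i par (x O) /\ Y (x i) (x (S i))).
    { induction i as [|i [Hi Hu]].
      - split; [reflexivity|]. destruct (Hx O); [assumption | exfalso; eauto].
      - split.
        + destruct (HY _ _ Hu) as [_ ->]. simpl. rewrite Hi; reflexivity.
        + destruct (Hx (S i)); [assumption | exfalso; eauto]. }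
    destruct (proj2 HT (x O)) as [n Hn].
    destruct (Hup n) as [Hi Hu]. destruct (HY _ _ Hu) as [Hr _].
    apply Hr; rewrite Hi; exact Hn. }
  destruct Hk as [k Hk]; exists k; intros j; induction j as [|j IH].
  - rewrite Nat.add_0_r; exact Hk.
  - rewrite Nat.add_succ_r; apply Hdown, IH.
Qed.

Lemma pruned_rayless {V : Type} (r : V) (par : V -> V) (X : V -> V -> Prop) (c : V -> Z) :
  rooted_tree r par -> edge_set r par X -> legal c X -> rayless (pruned X c).
Proof.
  intros HT HX Hlegal (x & Hinj & Hx).
  assert (HY : edge_set r par (pruned X c)) by (intros s t [H _]; exact (HX s t H)).
  destruct (tree_ray_descends r par _ x HT HY Hinj Hx) as [k Hk].
  set (z := fun i => x (S (k + i)%nat)).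
  assert (Hout : forall i, exists t, X (z i) t) by (intros i; destruct (Hk i) as [H _]; eauto).
  destruct (Hout O) as [t Ht].
  destruct (legal_out_safe X c Hlegal _ _ Ht) as [n Hn].
  apply (no_infinite_rank_descent X c z) with (n := n) (i := O); [|exact Hn].
  intros i. destruct (Hk (S i)) as [_ Hrank].
  unfold z; rewrite Nat.add_succ_r in *.
  destruct Hrank as [Hter | Hm]; [exfalso; apply Hter, (Hout i) | exact Hm].
Qed.

Theorem lemma2p8 (V : Type) (r : V) (par : V -> V)
  (HT : rooted_tree r par) (c : V -> Z) (X : V -> V -> Prop)
  (HX : edge_set r par X) (Hlegal : legal c X) :
  exists X' : V -> V -> Prop,
    subrel X' X /\ rayless X' /\
    (forall v, A_ge X v (c v) -> A_ge X' v (c v)) /\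
    (forall v, ter X v -> A_eq X' X v).
Proof.
  exists (pruned X c); split; [intros s t [H _]; exact H|].
  split; [exact (pruned_rayless r par X c HT HX Hlegal)|].
  split; [|exact (pruned_A_eq_ter X c)].
  intros v Ha. destruct (classic (ter X v)) as [Hter | Hnt].
  - exact (pruned_A_ge_ter X c v Hter Ha).
  - apply NNPP in Hnt; destruct Hnt as [t Ht].
    destruct (legal_out_safe X c Hlegal v t Ht) as [n Hn].
    exact (pruned_A_ge X c n v Hn Ha).
Qed.
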